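(* Let $G=(V,F,E)$ be a factor tree, i.e. a connected bipartite graph without cycles whose vertices are partitioned into variable nodes $V$ and factor nodes $F$, with every edge joining a variable node to a factor node. For $j\in V$ let $N(j)\subset F$ be its neighbouring factor nodes and $N_j=|N(j)|$; for $\alpha\in F$ let $N(\alpha)\subset V$ be its neighbouring variable nodes. Choose real numbers $c_\alpha>0$ for $\alpha\in F$ and $c_j\ge 0$ for $j\in V$ such that $\sum_{j\in V}c_j+\sum_{\alpha\in F}c_\alpha=1$. For every edge $(j,\alpha)\in E$ with $j\in V$, $\alpha\in F$, removing this edge splits $G$ into two trees; let $G_{1,j\alpha}=(V_{1,j\alpha},F_{1,j\alpha},E_{1,j\alpha})$ be the one containing $j$, and define $$c_{j\alpha}=\sum_{i\in V_{1,j\alpha}}c_i+\sum_{\beta\in F_{1,j\alpha}}c_\beta.$$ Then $c_\alpha>0$, $c_j\ge 0$, $c_{j\alpha}\ge 0$ for all $j\in V$, $\alpha\in F$, and $$c_j-\sum_{\alpha\in N(j)}c_{j\alpha}=1-N_j\quad\text{for all }j\in V,\qquad c_\alpha+\sum_{j\in N(\alpha)}c_{j\alpha}=1\quad\text{for all }\alpha\in F.$$ *)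

From mathcomp Require Import all_boot all_order all_algebra.
Set Implicit Arguments. Unset Strict Implicit. Unset Printing Implicit Defensive.
Import Order.TTheory GRing.Theory Num.Theory.

Definition fg_adj (V F : finType) (e : V -> F -> bool) : rel (V + F) :=
  fun x y =>
    match x, y with
    | inl j, inr a => e j a
    | inr a, inl j => e j a
    | _, _ => false
    end.

Definition fg_connected (V F : finType) (e : V -> F -> bool) : Prop :=
  forall x y : V + F, connect (fg_adj e) x y.

Definition fg_acyclic (V F : finType) (e : V -> F -> bool) : Prop :=
  forall s : seq (V + F), 2 < size s -> uniq s -> ~~ cycle (fg_adj e) s.

Definition factor_tree (V F : finType) (e : V -> F -> bool) : Prop :=
  fg_connected e /\ fg_acyclic e.

Definition fg_adj_rm (V F : finType) (e : V -> F -> bool) (j : V) (a : F)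
  : rel (V + F) :=
  fun x y => fg_adj e x y &&
    ~~ (((x == inl j) && (y == inr a)) || ((x == inr a) && (y == inl j))).

Definition fg_weight (R : nzRingType) (V F : finType)
  (cV : V -> R) (cF : F -> R) (x : V + F) : R :=
  match x with inl i => cV i | inr b => cF b end.

Definition c_edge (R : nzRingType) (V F : finType) (e : V -> F -> bool)
  (cV : V -> R) (cF : F -> R) (j : V) (a : F) : R :=
  (\sum_(x : V + F | connect (fg_adj_rm e j a) (inl j) x) fg_weight cV cF x)%R.

From mathcomp Require Import all_boot all_order all_algebra.
From mathcomp Require Import lra.
Import Order.TTheory GRing.Theory Num.Theory.

(** Deleting an edge [x y] of a tree leaves two components, the side of [x]
   and the side of [y]; and the sides of the neighbours [u] of a vertex [v]
   (each taken after deleting [v u]) partition the other vertices.  For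
   weights of total mass [1], the first fact gives [c_{j a} = 1 - w(side of a)]
   and the second says that the sides around a vertex weigh [1] minus its own
   weight; summing over the neighbours yields both identities. *)

Section TreeBranches.

Variables (T : finType) (r : rel T).
Hypothesis r_sym : symmetric r.
Hypothesis r_irr : irreflexive r.
Hypothesis r_acyclic : forall s : seq T, 2 < size s -> uniq s -> ~~ cycle r s.
Hypothesis r_connected : forall x y, connect r x y.

Definition del_edge (x y : T) : rel T := fun p q =>
  r p q && ~~ (((p == x) && (q == y)) || ((p == y) && (q == x))).

Lemma del_edge_sub x y : subrel (del_edge x y) r.
Proof. by move=> p q /andP[]. Qed.

Lemma del_edge_sym x y : symmetric (del_edge x y).
Proof.
move=> p q; rewrite /del_edge r_sym; congr (_ && ~~ _).
by case: (p == x); case: (q == y); case: (p == y); case: (q == x).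
Qed.

Lemma del_edgeC x y : del_edge x y =2 del_edge y x.
Proof.
move=> p q; rewrite /del_edge; congr (_ && ~~ _).
by case: (p == x); case: (q == y); case: (p == y); case: (q == x).
Qed.

Lemma connect_del_edgeC x y : connect (del_edge x y) =2 connect (del_edge y x).
Proof. exact/eq_connect/del_edgeC. Qed.

Lemma del_edge_disconnected {x y} : r x y -> ~~ connect (del_edge x y) y x.
Proof.
move=> rxy; apply/negP => /connectP[p p_path p_last].
case: (shortenP p_path) p_last => q q_path q_uniq _ q_last.
have x_neq_y : x != y by apply: contraTneq rxy => ->; rewrite r_irr.
have := @r_acyclic (y :: q).
rewrite q_uniq /= rcons_path (sub_path (@del_edge_sub x y) q_path) -q_last rxy.
case: q q_path q_uniq q_last => [|z [|z' q]] q_path _ q_last cyc.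
- by move: x_neq_y; rewrite q_last eqxx.
- by move: q_path; rewrite /= /del_edge q_last !eqxx orbT !andbF.
- by move: (cyc isT isT).
Qed.

Lemma del_edge_cover {x y} z :
  r x y -> connect (del_edge x y) x z || connect (del_edge x y) y z.
Proof.
move=> rxy; have /connectP[p p_path p_last] := r_connected z x.
rewrite !(sym_connect_sym (@del_edge_sym x y) _ z).
elim: p z p_path p_last => [|z1 p IHp] z /=; first by move=> _ ->; rewrite connect0.
move=> /andP[rz p_path] p_last.
have [-> | z_neq_x] := eqVneq z x; first by rewrite connect0.
have [-> | z_neq_y] := eqVneq z y; first by rewrite connect0 orbT.
have step : del_edge x y z z1.
  by rewrite /del_edge rz (negbTE z_neq_x) (negbTE z_neq_y) /= ?andbF.
by case/orP: (IHp _ p_path p_last) => H; apply/orP; [left | right];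
  apply: connect_trans (connect1 step) H.
Qed.

Lemma sum_sides (R : nmodType) (w : T -> R) {x y} : r x y ->
  (\sum_(z | connect (del_edge x y) x z) w z
   + \sum_(z | connect (del_edge x y) y z) w z = \sum_z w z)%R.
Proof.
move=> rxy; rewrite [RHS](bigID (connect (del_edge x y) x)) /=; congr (_ + _)%R.
apply: eq_bigl => z; have := del_edge_cover z rxy.
have [x_z | _] := boolP (connect _ x z); last by [].
move=> _; apply/negbTE; apply: contra (del_edge_disconnected rxy) => y_z.
by apply: connect_trans y_z _; rewrite (sym_connect_sym (@del_edge_sym x y)).
Qed.

Lemma branch_exists {v z} :
  z != v -> exists2 u, r v u & connect (del_edge v u) u z.
Proof.
have /connectP[p p_path p_last] := r_connected z v.
elim: p z p_path p_last => [|z1 p IHp] z /=; first by move=> _ ->; rewrite eqxx.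
move=> /andP[rz p_path] p_last z_neq_v.
have [z1_eq_v | z1_neq_v] := eqVneq z1 v.
  by exists z; rewrite // r_sym -z1_eq_v.
have [u rvu u_z1] := IHp _ p_path p_last z1_neq_v.
exists u => //; apply: connect_trans u_z1 (connect1 _).
by rewrite /del_edge r_sym rz /= (negbTE z_neq_v) (negbTE z1_neq_v) andbF.
Qed.

Lemma branch_unique {v z u w} : r v u -> r v w ->
  connect (del_edge v u) u z -> connect (del_edge v w) w z -> u = w.
Proof.
move=> rvu rvw /connectP[p p_path p_last] w_z.
apply/eqP/negPn/negP => u_neq_w.
have avoid_v : all (fun t => t != v) (u :: p).
  apply/allP => t t_in; apply: contraNneq (del_edge_disconnected rvu) => t_v.
  by move: t_in; rewrite t_v; apply: path_connect.
have p_path' : path (del_edge v w) u p.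
  apply: (sub_in_path (P := fun t => t != v)) _ avoid_v p_path.
  move=> a b a_neq_v b_neq_v /andP[rab _].
  by rewrite /del_edge rab (negbTE a_neq_v) (negbTE b_neq_v) andbF.
have w_u : connect (del_edge v w) w u.
  apply: connect_trans w_z _; rewrite (sym_connect_sym (@del_edge_sym v w)).
  by apply/connectP; exists p.
have u_v : del_edge v w u v.
  have u_neq_v : u != v := allP avoid_v u (mem_head _ _).
  by rewrite /del_edge r_sym rvu eqxx (negbTE u_neq_v) (negbTE u_neq_w).
by move: (del_edge_disconnected rvw); rewrite (connect_trans w_u (connect1 u_v)).
Qed.

Lemma sum_branches (R : nmodType) (w : T -> R) v :
  (w v + \sum_(u | r v u) \sum_(z | connect (del_edge v u) u z) w z
   = \sum_z w z)%R.
Proof.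
rewrite [RHS](bigD1 v) //=; congr (_ + _)%R.
rewrite (exchange_big_dep (fun z => z != v)) /=; last first.
  move=> u z rvu; apply: contraTneq => ->.
  exact: del_edge_disconnected.
apply: eq_bigr => z z_neq_v.
have [u rvu u_z] := branch_exists z_neq_v.
rewrite (bigD1 u) /=; last by rewrite rvu u_z.
rewrite big_pred0 ?addr0 // => u'; apply/negP => /andP[/andP[rvu' u'_z]].
by rewrite (branch_unique rvu rvu' u_z u'_z) eqxx.
Qed.

End TreeBranches.

Arguments del_edge {T} r x y.
Arguments sum_sides {T r} r_sym r_irr r_acyclic r_connected {R} w {x y}.
Arguments sum_branches {T r} r_sym r_irr r_acyclic r_connected {R} w v.

Local Open Scope ring_scope.

Lemma c_edgeE (R : nzRingType) (V F : finType) (e : V -> F -> bool)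
    (cV : V -> R) (cF : F -> R) j a :
  c_edge e cV cF j a =
    \sum_(z | connect (del_edge (fg_adj e) (inl j) (inr a)) (inl j) z)
      fg_weight cV cF z.
Proof. by []. Qed.

Theorem proposition1 (R : realFieldType) (V F : finType) (e : V -> F -> bool)
  (cV : V -> R) (cF : F -> R) :
  factor_tree e ->
  (forall a, 0 < cF a) ->
  (forall j, 0 <= cV j) ->
  \sum_(j : V) cV j + \sum_(a : F) cF a = 1 ->
  [/\ (forall a, 0 < cF a),
      (forall j, 0 <= cV j),
      (forall j a, e j a -> 0 <= c_edge e cV cF j a),
      (forall j, cV j - \sum_(a : F | e j a) c_edge e cV cF j a
                 = 1 - (#|[set a : F | e j a]|)%:R)
    & (forall a, cF a + \sum_(j : V | e j a) c_edge e cV cF j a = 1)].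
Proof.
move=> [connected acyclic] cF_gt0 cV_ge0 total.
have adj_sym : symmetric (fg_adj e) by move=> [x|x] [y|y].
have adj_irr : irreflexive (fg_adj e) by move=> [x|x].
pose w := fg_weight cV cF.
have w_total : \sum_x w x = 1 by rewrite big_sumType.
have factor_side j a : e j a ->
    \sum_(z | connect (del_edge (fg_adj e) (inl j) (inr a)) (inr a) z) w z
    = 1 - c_edge e cV cF j a.
  move=> eja; have adj_ja : fg_adj e (inl j) (inr a) := eja.
  by rewrite -w_total -(sum_sides adj_sym adj_irr acyclic connected w adj_ja)
    c_edgeE addrC addKr.
split=> // [j a _ | j | a].
- by apply: sumr_ge0 => -[x|x] _ //=; apply: ltW.
- have := sum_branches adj_sym adj_irr acyclic connected w (inl j).
  rewrite w_total big_sumType /= big_pred0_eq add0r (eq_bigr _ (factor_side j)).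
  have card_N : \sum_(a | e j a) (1 : R) = #|[set a | e j a]|%:R.
    by rewrite -sumr_const; apply: eq_bigl => a; rewrite inE.
  rewrite sumrB card_N => ?; lra.
- have := sum_branches adj_sym adj_irr acyclic connected w (inr a).
  rewrite w_total big_sumType /= big_pred0_eq addr0 => <-.
  congr (_ + _); apply: eq_bigr => j _; apply: eq_bigl => z.
  exact: connect_del_edgeC.
Qed.
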